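(* Let $N\ge1$, $z_1,\dots,z_N\in\mathbb{C}^*$, $n_1,\dots,n_N\in\mathbb{C}$, $z=z_1\cdots z_N$, and assume $z^2-z^{-2}\neq0$. Let $U=\mathrm{span}(a_1,\dots,a_N)$, $U'=\mathrm{span}(b_1,\dots,b_N)$ in $\mathrm{Cl}_N$, paired by $\langle a_j,b_i\rangle=\delta_{ij}$, and let \[ \Phi(X)=\sum_{i=1}^N z_1^{-1}\cdots z_{i-1}^{-1}z_{i+1}\cdots z_N\,a_i,\quad \Phi(Y)=\sum_{i=1}^N z_1^{-1}\cdots z_{i-1}^{-1}(z_i^2-z_i^{-2})z_{i+1}\cdots z_N\,b_i,\quad \Phi(G)=\sum_{i=1}^N(n_i+a_ib_i). \] Let $W=\{w\in U:\langle w,\Phi(Y)\rangle=0\}$, $W'=\{w'\in U':\langle\Phi(X),w'\rangle=0\}$, and let $\mathrm{Cl}_W\subset\mathrm{Cl}_N$ be the subalgebra generated by $W\cup W'$. Then the subalgebra of elements of $\mathrm{Cl}_W$ commuting with $\Phi(G)$ is the part of $\mathrm{Cl}_W$ of Euler degree $0$, i.e. the subalgebra generated by the products $ww'$ with $w\in W$, $w'\in W'$. Moreover, if $w_1,\dots,w_d$ is a basis of $W$ and $w'_1,\dots,w'_d$ is the basis of $W'$ with $\langle w_i,w'_j\rangle=\delta_{ij}$, then $E_{ij}\mapsto w_iw'_j$ (where $E_{ij}$ are the matrix units of $\mathfrak{gl}(W)\cong\mathfrak{gl}_d$) extends to an algebra homomorphism $U(\mathfrak{gl}(W))\to\mathrm{Cl}_W\subset\mathrm{Cl}_N$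 whose image is exactly this subalgebra.
   Context: $\mathrm{Cl}_N$ is the Clifford superalgebra over $\mathbb{C}$ generated by odd elements $a_1,\dots,a_N,b_1,\dots,b_N$ with relations $a_ia_j+a_ja_i=0$, $b_ib_j+b_jb_i=0$, $a_ib_j+b_ja_i=\delta_{ij}$. The Euler degree is the $\mathbb{Z}$-grading on $\mathrm{Cl}_N$ with $\deg a_i=1$, $\deg b_i=-1$. $U(\mathfrak{gl}(W))$ is the universal enveloping algebra of the Lie algebra $\mathfrak{gl}(W)$. *)

From HB Require Import structures.
From mathcomp Require Import all_boot all_order all_algebra.
From mathcomp Require Import complex.
From mathcomp Require Import reals Rstruct.
Set Implicit Arguments. Unset Strict Implicit. Unset Printing Implicit Defensive.
Import Order.TTheory GRing.Theory Num.Theory.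
Local Open Scope ring_scope.

Definition C : numClosedFieldType := (Rdefinitions.R)[i].

(* The Clifford algebra Cl_N, realised (faithfully: Cl_N is simple of   *)
(* dimension 2^(2N)) by its Fock representation on the exterior algebra *)
(* Lambda(C^N), whose basis is indexed by subsets S of {0..N-1}.        *)
(* a_k = wedge with e_k, b_k = contraction with e_k^*.                  *)

Definition fdim (N : nat) : nat := #|{set 'I_N}|.

Definition fset_of (N : nat) (i : 'I_(fdim N)) : {set 'I_N} := enum_val i.

Definition Cl (N : nat) := 'M[C]_(fdim N).

Definition ksign (N : nat) (k : 'I_N) (T : {set 'I_N}) : C :=
  (-1) ^+ #|[set j in T | (j < k)%N]|.

Definition gen_a (N : nat) (k : 'I_N) : Cl N :=
  \matrix_(i, j) (if (k \notin fset_of j) && (fset_of i == k |: fset_of j)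
                  then ksign k (fset_of j) else 0).

Definition gen_b (N : nat) (k : 'I_N) : Cl N :=
  \matrix_(i, j) (if (k \in fset_of j) && (fset_of i == fset_of j :\ k)
                  then ksign k (fset_of j) else 0).

(* x has Euler degree 0: it maps Lambda^p into Lambda^p for every p,
   i.e. its matrix entries between basis vectors of different exterior
   degree vanish (deg a_k = 1, deg b_k = -1). *)
Definition euler_deg0 (N : nat) (x : Cl N) : Prop :=
  forall i j : 'I_(fdim N), #|fset_of i| != #|fset_of j| -> x i j = 0.

Definition inU (N : nat) (u : 'I_N -> C) : Cl N := \sum_k u k *: gen_a k.
Definition inU' (N : nat) (v : 'I_N -> C) : Cl N := \sum_k v k *: gen_b k.

Definition pairing (N : nat) (u v : 'I_N -> C) : C := \sum_k u k * v k.

Inductive gen_alg (N : nat) (S : Cl N -> Prop) : Cl N -> Prop :=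
| ga_gen x : S x -> gen_alg S x
| ga_one : gen_alg S 1
| ga_add x y : gen_alg S x -> gen_alg S y -> gen_alg S (x + y)
| ga_scale (c : C) x : gen_alg S x -> gen_alg S (c *: x)
| ga_mul x y : gen_alg S x -> gen_alg S y -> gen_alg S (x * y).

Definition phiX_coef (N : nat) (z : 'I_N -> C) (i : 'I_N) : C :=
  (\prod_(j < N | (j < i)%N) (z j)^-1) * (\prod_(j < N | (i < j)%N) z j).
Definition phiY_coef (N : nat) (z : 'I_N -> C) (i : 'I_N) : C :=
  (\prod_(j < N | (j < i)%N) (z j)^-1) * ((z i) ^+ 2 - (z i) ^- 2)
  * (\prod_(j < N | (i < j)%N) z j).

Definition phiG (N : nat) (n : 'I_N -> C) : Cl N :=
  \sum_i (n i *: (1 : Cl N) + gen_a i * gen_b i : Cl N).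

Definition inW (N : nat) (z : 'I_N -> C) (u : 'I_N -> C) : Prop :=
  pairing u (phiY_coef z) = 0.
Definition inW' (N : nat) (z : 'I_N -> C) (v : 'I_N -> C) : Prop :=
  pairing (phiX_coef z) v = 0.

Definition ClW (N : nat) (z : 'I_N -> C) : Cl N -> Prop :=
  gen_alg (fun x => (exists2 u, inW z u & x = inU u) \/
                    (exists2 v, inW' z v & x = inU' v)).

Definition prodWW' (N : nat) (z : 'I_N -> C) (x : Cl N) : Prop :=
  exists u v, [/\ inW z u, inW' z v & x = inU u * inU' v].

Definition is_basis (N d : nat) (P : ('I_N -> C) -> Prop)
    (f : 'I_d -> 'I_N -> C) : Prop :=
  [/\ forall i, P (f i),
      (forall c : 'I_d -> C, (forall k, \sum_i c i * f i k = 0) ->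
          forall i, c i = 0) &
      (forall u, P u -> exists c : 'I_d -> C,
          forall k, u k = \sum_i c i * f i k)].

(* The assignment E_ij |-> e i j extends to an (associative, unital)
   algebra homomorphism U(gl_d) -> Cl_N iff it is a Lie algebra
   homomorphism gl_d -> Cl_N, i.e. iff the e i j satisfy the defining
   relations [E_ij, E_kl] = delta_jk E_il - delta_li E_kj
   (universal property of the universal enveloping algebra). *)
Definition gl_relations (N d : nat) (e : 'I_d -> 'I_d -> Cl N) : Prop :=
  forall i j k l : 'I_d,
    e i j * e k l - e k l * e i j =
      (if j == k then e i l else 0) - (if l == i then e k j else 0).

(* Cl_N acts faithfully on Lambda(C^N) by its Fock representation; the basis
   vector e_T is indexed by a subset T of {0..N-1} and a matrix entry (S, T)
   has Euler degree |S| - |T|.  Phi(G) acts diagonally, by sum_i n_i + |T| on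
   e_T, so x commutes with Phi(G) exactly when all its entries of nonzero
   degree vanish.

   Let G0 be the algebra generated by the products w w'.  The anticommutation
   relations give G0 w <= W G0, G0 w' <= W' G0, W G0 W' <= G0 and
   G0 W' W <= G0, so that the spaces A_k = W^k G0 (k >= 0) and
   A_k = G0 W'^(-k) (k < 0) satisfy A_k A_m <= A_(k+m).  Hence the degree-k
   component of every element of Cl_W lies in A_k; for k = 0 this is G0.  The
   gl relations among the w_i w'_j follow from the anticommutation relations
   and duality. *)

From HB Require Import structures.
From mathcomp Require Import all_boot all_order all_algebra.
From mathcomp Require Import complex.
From mathcomp Require Import reals Rstruct.
From mathcomp Require Import ring zify.
Import Order.TTheory GRing.Theory Num.Theory.
Set Implicit Arguments. Unset Strict Implicit. Unset Printing Implicit Defensive.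
Local Open Scope ring_scope.

(** * The Fock representation *)

Definition entry N (x : Cl N) (S T : {set 'I_N}) : C := x (enum_rank S) (enum_rank T).

Lemma fset_of_rank N (S : {set 'I_N}) : fset_of (enum_rank S) = S.
Proof. exact: enum_rankK. Qed.

Lemma entry_ext N (x y : Cl N) : (forall S T, entry x S T = entry y S T) -> x = y.
Proof.
by move=> e; apply/matrixP => i j; rewrite -(enum_valK i) -(enum_valK j); exact: e.
Qed.

Lemma entryM N (x y : Cl N) S T : entry (x * y) S T = \sum_U entry x S U * entry y U T.
Proof.
rewrite /entry mxE (reindex (@enum_rank _)) //.
by exists enum_val => U _; [exact: enum_rankK | exact: enum_valK].
Qed.

Lemma entryD N (x y : Cl N) S T : entry (x + y) S T = entry x S T + entry y S T.
Proof. by rewrite /entry mxE. Qed.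

Lemma entryZ N c (x : Cl N) S T : entry (c *: x) S T = c * entry x S T.
Proof. by rewrite /entry mxE. Qed.

Lemma entry0 N S T : entry (0 : Cl N) S T = 0.
Proof. by rewrite /entry mxE. Qed.

Lemma entry1 N S T : entry (1 : Cl N) S T = (S == T)%:R.
Proof. by rewrite /entry mxE (inj_eq enum_rank_inj). Qed.

Lemma entry_sum N (I : Type) (r : seq I) (P : pred I) (F : I -> Cl N) S T :
  entry (\sum_(i <- r | P i) F i) S T = \sum_(i <- r | P i) entry (F i) S T.
Proof. by rewrite /entry summxE. Qed.

Lemma entry_gen_a N (k : 'I_N) S T :
  entry (gen_a k) S T = if S == k |: T then (if k \notin T then ksign k T else 0) else 0.
Proof. by rewrite /entry mxE !fset_of_rank; case: (k \in T); case: (S == _). Qed.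

Lemma entry_gen_b N (k : 'I_N) S T :
  entry (gen_b k) S T = if S == T :\ k then (if k \in T then ksign k T else 0) else 0.
Proof. by rewrite /entry mxE !fset_of_rank; case: (k \in T); case: (S == _). Qed.

Lemma entry_mul_gen_a N (x : Cl N) k S T :
  entry (x * gen_a k) S T = entry x S (k |: T) * (if k \notin T then ksign k T else 0).
Proof.
rewrite entryM (bigD1 (k |: T)) //= entry_gen_a eqxx big1 ?addr0 // => U /negbTE UkT.
by rewrite entry_gen_a UkT mulr0.
Qed.

Lemma entry_mul_gen_b N (x : Cl N) k S T :
  entry (x * gen_b k) S T = entry x S (T :\ k) * (if k \in T then ksign k T else 0).
Proof.
rewrite entryM (bigD1 (T :\ k)) //= entry_gen_b eqxx big1 ?addr0 // => U /negbTE UTk.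
by rewrite entry_gen_b UTk mulr0.
Qed.

Lemma ksignU1 N (k j : 'I_N) (T : {set 'I_N}) : j \notin T ->
  ksign k (j |: T) = (-1) ^+ (j < k)%N * ksign k T.
Proof.
move=> jT; rewrite /ksign -exprD; case: ltnP => jk.
  have -> : [set x in j |: T | (x < k)%N] = j |: [set x in T | (x < k)%N].
    by apply/setP => x; rewrite !inE; case: eqVneq => // ->; rewrite jk.
  by rewrite cardsU1 inE (negbTE jT).
congr (_ ^+ _); apply: eq_card => x; rewrite !inE.
by case: eqVneq => // ->; rewrite (negbTE jT) ltnNge jk.
Qed.

Lemma ksignD1 N (k j : 'I_N) (T : {set 'I_N}) : j \in T ->
  ksign k (T :\ j) = (-1) ^+ (j < k)%N * ksign k T.
Proof. by move=> jT; rewrite -{2}(setD1K jT) ksignU1 ?setD11 // signrMK. Qed.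

Lemma ksignU1_self N (k : 'I_N) (T : {set 'I_N}) : ksign k (k |: T) = ksign k T.
Proof.
have [kT|kT] := boolP (k \in T); first by rewrite (setUidPr _) // sub1set.
by rewrite ksignU1 // ltnn mul1r.
Qed.

Lemma ksignD1_self N (k : 'I_N) (T : {set 'I_N}) : ksign k (T :\ k) = ksign k T.
Proof.
have [kT|kT] := boolP (k \in T); first by rewrite ksignD1 // ltnn mul1r.
by rewrite (setDidPl _) // disjoint_sym disjoints1.
Qed.

Lemma ksign_sq N (k : 'I_N) (T : {set 'I_N}) : ksign k T * ksign k T = 1.
Proof. by rewrite -expr2 sqrr_sign. Qed.

Lemma sign_ltn_anti N (i j : 'I_N) : i != j ->
  (-1) ^+ (j < i)%N + (-1) ^+ (i < j)%N = 0 :> C.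
Proof.
move=> ij; case: ltngtP => [_|_|eij]; rewrite ?expr0 ?expr1 ?addrN ?addNr //.
by case/eqP: ij; apply: val_inj.
Qed.

Lemma gen_a_anticomm N (i j : 'I_N) : gen_a i * gen_a j + gen_a j * gen_a i = 0.
Proof.
apply: entry_ext => S T; rewrite entryD !entry_mul_gen_a !entry_gen_a entry0.
have [<-|ij] := eqVneq i j; first by rewrite setU11 /= !if_same !mul0r addr0.
rewrite !in_setU1 (eq_sym j i) (negbTE ij) /=.
have [jT|jT] /= := boolP (j \in T); first by rewrite !if_same mulr0 mul0r addr0.
have [iT|iT] /= := boolP (i \in T); first by rewrite !if_same mulr0 mul0r addr0.
rewrite setUCA; case: (S == _); last by rewrite !mul0r addr0.
rewrite !ksignU1 //; transitivity
  (ksign i T * ksign j T * ((-1) ^+ (j < i)%N + (-1) ^+ (i < j)%N)); first ring.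
by rewrite sign_ltn_anti // mulr0.
Qed.

Lemma gen_b_anticomm N (i j : 'I_N) : gen_b i * gen_b j + gen_b j * gen_b i = 0.
Proof.
apply: entry_ext => S T; rewrite entryD !entry_mul_gen_b !entry_gen_b entry0.
have [<-|ij] := eqVneq i j; first by rewrite setD11 /= !if_same !mul0r addr0.
rewrite !in_setD1 (eq_sym j i) (negbTE ij) /=.
have [jT|jT] /= := boolP (j \in T); last by rewrite !if_same mulr0 mul0r addr0.
have [iT|iT] /= := boolP (i \in T); last by rewrite !if_same mulr0 mul0r addr0.
rewrite !setDDl setUC; case: (S == _); last by rewrite !mul0r addr0.
rewrite !ksignD1 //; transitivity
  (ksign i T * ksign j T * ((-1) ^+ (j < i)%N + (-1) ^+ (i < j)%N)); first ring.
by rewrite sign_ltn_anti // mulr0.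
Qed.

Lemma gen_ab_anticomm N (i j : 'I_N) :
  gen_a i * gen_b j + gen_b j * gen_a i = (i == j)%:R.
Proof.
apply: entry_ext => S T; rewrite entryD entry_mul_gen_b entry_mul_gen_a.
rewrite entry_gen_a entry_gen_b.
have [<-|ij] := eqVneq i j.
  rewrite entry1 setU11 setD11 /=; have [iT|iT] /= := boolP (i \in T).
    rewrite setD1K // ksignD1_self mulr0 addr0.
    by case: (S == T); rewrite ?mul0r // ksign_sq.
  rewrite setU1K // ksignU1_self mulr0 add0r.
  by case: (S == T); rewrite ?mul0r // ksign_sq.
rewrite entry0 in_setD1 in_setU1 (negbTE ij) (eq_sym j i) (negbTE ij) /=.
have -> : (i |: T) :\ j = i |: (T :\ j).
  by apply/setP => x; rewrite !inE; case: (eqVneq x i) => //= ->; rewrite ij.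
have [jT|jT] /= := boolP (j \in T); last by rewrite !mulr0 add0r !if_same mul0r.
have [iT|iT] /= := boolP (i \in T); first by rewrite !if_same mul0r mulr0 addr0.
case: (S == _); last by rewrite !mul0r addr0.
rewrite ksignD1 // ksignU1 //; transitivity
  (ksign i T * ksign j T * ((-1) ^+ (j < i)%N + (-1) ^+ (i < j)%N)); first ring.
by rewrite sign_ltn_anti // mulr0.
Qed.

Lemma entry_number_op N (i : 'I_N) S T :
  entry (gen_a i * gen_b i) S T = ((S == T) && (i \in T))%:R.
Proof.
rewrite entry_mul_gen_b entry_gen_a setD11 /=.
have [iT|iT] /= := boolP (i \in T); last by rewrite mulr0 andbF.
rewrite setD1K // ksignD1_self andbT.
by case: (S == T); rewrite ?mul0r // ksign_sq.
Qed.

Lemma scaleClAl N c (x y : Cl N) : c *: (x * y) = (c *: x) * y.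
Proof. exact: scalemxAl. Qed.

Lemma scaleClAr N c (x y : Cl N) : c *: (x * y) = x * (c *: y).
Proof. exact: scalemxAr. Qed.

Lemma anticomm_lincomb N (I : finType) (u v : I -> C) (f g : I -> Cl N) :
  (\sum_k u k *: f k) * (\sum_l v l *: g l) + (\sum_l v l *: g l) * (\sum_k u k *: f k)
  = \sum_k \sum_l (u k * v l) *: (f k * g l + g l * f k).
Proof.
have expand (F G : I -> Cl N) :
    (\sum_k F k) * (\sum_l G l) = \sum_k \sum_l F k * G l.
  by rewrite mulr_suml; apply: eq_bigr => k _; rewrite mulr_sumr.
rewrite !expand [X in _ + X]exchange_big -big_split; apply: eq_bigr => k _.
rewrite -big_split; apply: eq_bigr => l _ /=.
by rewrite -!scaleClAl -!scaleClAr !scalerA (mulrC (v l)) scalerDr.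
Qed.

Lemma inU_anticomm N (u u' : 'I_N -> C) : inU u * inU u' = - (inU u' * inU u).
Proof.
apply/eqP; rewrite -addr_eq0 anticomm_lincomb.
by apply/eqP/big1 => k _; apply: big1 => l _; rewrite gen_a_anticomm scaler0.
Qed.

Lemma inU'_anticomm N (v v' : 'I_N -> C) : inU' v * inU' v' = - (inU' v' * inU' v).
Proof.
apply/eqP; rewrite -addr_eq0 anticomm_lincomb.
by apply/eqP/big1 => k _; apply: big1 => l _; rewrite gen_b_anticomm scaler0.
Qed.

Lemma inU'_inU N (u v : 'I_N -> C) :
  inU' v * inU u = pairing u v *: (1 : Cl N) - inU u * inU' v.
Proof.
apply/eqP; rewrite eq_sym subr_eq addrC anticomm_lincomb /pairing scaler_suml.
apply/eqP/eq_bigr => k _; rewrite (bigD1 k) //= big1 ?addr0.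
  by rewrite gen_ab_anticomm eqxx.
by move=> l /negbTE lk; rewrite gen_ab_anticomm eq_sym lk scaler0.
Qed.

(** * Euler degree *)

Definition homog N (d : int) (x : Cl N) : Prop :=
  forall S T : {set 'I_N}, #|S|%:Z - #|T|%:Z != d -> entry x S T = 0.

Lemma euler_deg0_homog N (x : Cl N) : euler_deg0 x <-> homog 0 x.
Proof.
split=> x0 => [S T|i j].
  by rewrite subr_eq0 eqz_nat => dST; apply: x0; rewrite !fset_of_rank.
by rewrite -eqz_nat -subr_eq0 => ij; have := x0 _ _ ij; rewrite /entry !enum_valK.
Qed.

Lemma homog0 N d : homog d (0 : Cl N).
Proof. by move=> S T _; rewrite entry0. Qed.

Lemma homogD N d (x y : Cl N) : homog d x -> homog d y -> homog d (x + y).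
Proof. by move=> hx hy S T dST; rewrite entryD hx ?hy ?addr0. Qed.

Lemma homogZ N d c (x : Cl N) : homog d x -> homog d (c *: x).
Proof. by move=> hx S T dST; rewrite entryZ hx ?mulr0. Qed.

Lemma homog_sum N d (I : Type) (r : seq I) (P : pred I) (F : I -> Cl N) :
  (forall i, P i -> homog d (F i)) -> homog d (\sum_(i <- r | P i) F i).
Proof. by move=> hF; elim/big_ind: _ => //; [exact: homog0 | exact: homogD]. Qed.

Lemma homog1 N : homog 0 (1 : Cl N).
Proof. by move=> S T; rewrite entry1 subr_eq0 eqz_nat; case: (eqVneq S T) => [->|]; rewrite ?eqxx. Qed.

Lemma homogM N d e (x y : Cl N) : homog d x -> homog e y -> homog (d + e) (x * y).
Proof.
move=> hx hy S T dST; rewrite entryM; apply: big1 => U _.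
have [dSU|dSU] := eqVneq (#|S|%:Z - #|U|%:Z) d; last by rewrite hx ?mul0r.
rewrite hy ?mulr0 //; apply: contra dST => /eqP <-.
by rewrite -dSU addrA subrK.
Qed.

Lemma homog_gen_a N (k : 'I_N) : homog 1 (gen_a k).
Proof.
move=> S T; rewrite entry_gen_a; have [->|//] := eqVneq S (k |: T).
by case: (boolP (k \in T)) => //= kT; rewrite cardsU1 kT PoszD addrK eqxx.
Qed.

Lemma homog_gen_b N (k : 'I_N) : homog (-1) (gen_b k).
Proof.
move=> S T; rewrite entry_gen_b; have [->|//] := eqVneq S (T :\ k).
case: (boolP (k \in T)) => //= kT; rewrite [in #|T|](cardsD1 k) kT PoszD.
by rewrite opprD addrCA subrr addr0 eqxx.
Qed.

Lemma homog_inU N (u : 'I_N -> C) : homog 1 (inU u).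
Proof. by apply: homog_sum => k _; apply/homogZ/homog_gen_a. Qed.

Lemma homog_inU' N (v : 'I_N -> C) : homog (-1) (inU' v).
Proof. by apply: homog_sum => k _; apply/homogZ/homog_gen_b. Qed.

Lemma entry_phiG N (n : 'I_N -> C) S T :
  entry (phiG n) S T = (S == T)%:R * (\sum_i n i + #|T|%:R).
Proof.
rewrite /phiG entry_sum.
under eq_bigr => i _ do rewrite entryD entryZ entry1 entry_number_op.
have [<-|ST] := eqVneq S T; last by rewrite mul0r big1 // => i _; rewrite mulr0 add0r.
rewrite mul1r big_split /=; congr (_ + _); first by apply: eq_bigr => i _; rewrite mulr1.
by rewrite -sumr_const [RHS]big_mkcond; apply: eq_bigr => i _; case: (i \in S).
Qed.

Lemma phiG_commute_homog0 N (n : 'I_N -> C) (x : Cl N) :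
  x * phiG n = phiG n * x <-> homog 0 x.
Proof.
pose ev (T : {set 'I_N}) := \sum_i n i + #|T|%:R.
have xG S T : entry (x * phiG n) S T = entry x S T * ev T.
  rewrite entryM (bigD1 T) //= big1 => [|U /negbTE UT].
    by rewrite addr0 entry_phiG eqxx mul1r.
  by rewrite entry_phiG UT mul0r mulr0.
have Gx S T : entry (phiG n * x) S T = ev S * entry x S T.
  rewrite entryM (bigD1 S) //= big1 => [|U /negbTE US].
    by rewrite addr0 entry_phiG eqxx mul1r.
  by rewrite entry_phiG eq_sym US !mul0r.
split=> [comm S T dST|x0].
  have /eqP : entry x S T * (ev T - ev S) = 0.
    by rewrite mulrBr [in X in _ - X]mulrC -xG -Gx comm subrr.
  rewrite mulf_eq0 /ev opprD addrACA subrr add0r subr_eq0 eqr_nat.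
  by case/orP => [/eqP //|/eqP eST]; move: dST; rewrite eST subrr.
apply: entry_ext => S T; rewrite xG Gx.
have [eST|dST] := eqVneq #|S| #|T|; first by rewrite /ev eST mulrC.
by rewrite x0 ?mulr0 ?mul0r // subr_eq0 eqz_nat.
Qed.

Definition dproj N (k : int) (x : Cl N) : Cl N :=
  \matrix_(i, j) if #|fset_of i|%:Z - #|fset_of j|%:Z == k then x i j else 0.

Lemma entry_dproj N k (x : Cl N) S T :
  entry (dproj k x) S T = if #|S|%:Z - #|T|%:Z == k then entry x S T else 0.
Proof. by rewrite /entry mxE !fset_of_rank. Qed.

Lemma homog_dproj N k (x : Cl N) : homog k (dproj k x).
Proof. by move=> S T dST; rewrite entry_dproj (negbTE dST). Qed.

Lemma dproj_homog N d k (x : Cl N) : homog d x -> dproj k x = if d == k then x else 0.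
Proof.
move=> hx; apply: entry_ext => S T; rewrite entry_dproj.
have [<-|dk] := eqVneq d k; first by case: eqVneq => // /hx ->.
case: eqP => [dST|_]; last by rewrite entry0.
by rewrite entry0 hx // dST eq_sym.
Qed.

Lemma dprojD N k (x y : Cl N) : dproj k (x + y) = dproj k x + dproj k y.
Proof.
by apply: entry_ext => S T; rewrite !(entryD, entry_dproj); case: ifP; rewrite ?addr0.
Qed.

Lemma dprojZ N k c (x : Cl N) : dproj k (c *: x) = c *: dproj k x.
Proof.
by apply: entry_ext => S T; rewrite !(entryZ, entry_dproj); case: ifP; rewrite ?mulr0.
Qed.

Lemma dproj_homogMl N d k (x y : Cl N) :
  homog d x -> dproj k (x * y) = x * dproj (k - d) y.
Proof.
move=> hx; apply: entry_ext => S T; rewrite entry_dproj !entryM.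
have -> : (if #|S|%:Z - #|T|%:Z == k then \sum_U entry x S U * entry y U T else 0)
        = \sum_U (if #|S|%:Z - #|T|%:Z == k then entry x S U * entry y U T else 0).
  by case: (_ == k); rewrite ?big1_eq.
apply: eq_bigr => U _; rewrite entry_dproj.
have [dSU|/hx ->] := eqVneq (#|S|%:Z - #|U|%:Z) d; last by rewrite !mul0r if_same.
have -> : (#|U|%:Z - #|T|%:Z == k - d) = (#|S|%:Z - #|T|%:Z == k).
  by rewrite -(inj_eq (addIr d)) subrK -dSU addrC addrA subrK.
by case: ifP; rewrite ?mulr0.
Qed.

Lemma sum_dproj N (x : Cl N) : x = \sum_(m < (N + N).+1) dproj (m%:Z - N%:Z) x.
Proof.
apply: entry_ext => S T; rewrite entry_sum.
have leS : (#|S| <= N)%N by rewrite -[X in (_ <= X)%N]card_ord max_card.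
have leT : (#|T| <= N)%N by rewrite -[X in (_ <= X)%N]card_ord max_card.
have mST : (#|S| + N - #|T| < (N + N).+1)%N by lia.
have degST : (#|S| + N - #|T|)%N%:Z - N%:Z = #|S|%:Z - #|T|%:Z.
  rewrite -subzn; last by rewrite (leq_trans leT) // leq_addl.
  by rewrite PoszD addrAC addrK.
rewrite (bigD1 (Ordinal mST)) //= big1 ?addr0 => [|m mST'].
  by rewrite entry_dproj degST eqxx.
rewrite entry_dproj; case: eqP => // dm; case/eqP: mST'; apply: val_inj => /=.
by apply/eqP; rewrite -eqz_nat; apply/eqP/(addIr (- N%:Z)); rewrite degST.
Qed.

Lemma dproj_sum N k (I : Type) (r : seq I) (P : pred I) (F : I -> Cl N) :
  dproj k (\sum_(i <- r | P i) F i) = \sum_(i <- r | P i) dproj k (F i).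
Proof.
apply: entry_ext => S T; rewrite entry_dproj !entry_sum.
under [RHS]eq_bigr do rewrite entry_dproj.
by case: ifP; rewrite ?big1_eq.
Qed.

Lemma dprojM N k (x y : Cl N) : dproj k (x * y) =
  \sum_(m < (N + N).+1) dproj (m%:Z - N%:Z) x * dproj (k - (m%:Z - N%:Z)) y.
Proof.
rewrite {1}(sum_dproj x) mulr_suml dproj_sum.
by apply: eq_bigr => m _; apply: dproj_homogMl; exact: homog_dproj.
Qed.

(** * Degree components of the algebra generated by W and W' *)

Definition lin_closed N (P : Cl N -> Prop) : Prop :=
  [/\ P 0, forall x y, P x -> P y -> P (x + y) & forall c x, P x -> P (c *: x)].

Lemma lin_closed_sum N (P : Cl N -> Prop) (I : Type) (r : seq I) (Q : pred I) F :
  lin_closed P -> (forall i, Q i -> P (F i)) -> P (\sum_(i <- r | Q i) F i).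
Proof. by case=> P0 PD _ PF; elim/big_ind: _. Qed.

Inductive linspan N (S : Cl N -> Prop) : Cl N -> Prop :=
| linspan_gen x : S x -> linspan S x
| linspan0 : linspan S 0
| linspanD x y : linspan S x -> linspan S y -> linspan S (x + y)
| linspanZ (c : C) x : linspan S x -> linspan S (c *: x).

Lemma linspan_lin_closed N (S : Cl N -> Prop) : lin_closed (linspan S).
Proof. by split; [exact: linspan0 | exact: linspanD | exact: linspanZ]. Qed.

Lemma gen_alg_lin_closed N (S : Cl N -> Prop) : lin_closed (gen_alg S).
Proof.
split; [|exact: ga_add | exact: ga_scale].
by rewrite -(scale0r (1 : Cl N)); apply/ga_scale/ga_one.
Qed.

Lemma gen_alg_min N (S S' : Cl N -> Prop) :
  (forall s, S s -> gen_alg S' s) -> forall x, gen_alg S x -> gen_alg S' x.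
Proof.
move=> SS' x; elim=> {x} //; first exact: ga_one.
- by move=> *; apply: ga_add.
- by move=> *; apply: ga_scale.
- by move=> *; apply: ga_mul.
Qed.

Lemma linspan_lmul N (S P : Cl N -> Prop) (x : Cl N) :
  lin_closed P -> (forall s, S s -> P (x * s)) -> forall y, linspan S y -> P (x * y).
Proof.
case=> P0 PD PZ PxS y; elim=> {y} [s /PxS //| |a b _ Pa _ Pb|c a _ Pa].
- by rewrite mulr0.
- by rewrite mulrDr; apply: PD.
- by rewrite -scaleClAr; apply: PZ.
Qed.

Lemma linspan_rmul N (S P : Cl N -> Prop) (x : Cl N) :
  lin_closed P -> (forall s, S s -> P (s * x)) -> forall y, linspan S y -> P (y * x).
Proof.
case=> P0 PD PZ PSx y; elim=> {y} [s /PSx //| |a b _ Pa _ Pb|c a _ Pa].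
- by rewrite mul0r.
- by rewrite mulrDl; apply: PD.
- by rewrite -scaleClAl; apply: PZ.
Qed.

Section DegreeParts.

Variables (N : nat) (W W' : ('I_N -> C) -> Prop).

Definition deg0_alg : Cl N -> Prop :=
  gen_alg (fun x => exists u v, [/\ W u, W' v & x = inU u * inU' v]).

Fixpoint pos_part (n : nat) : Cl N -> Prop :=
  if n is m.+1 then linspan (fun x => exists u y, [/\ W u, pos_part m y & x = inU u * y])
  else deg0_alg.

Fixpoint neg_part (n : nat) : Cl N -> Prop :=
  if n is m.+1 then linspan (fun x => exists v y, [/\ W' v, neg_part m y & x = y * inU' v])
  else deg0_alg.

Definition deg_part (k : int) : Cl N -> Prop :=
  match k with Posz n => pos_part n | Negz n => neg_part n.+1 end.

Definition W'deg0 : Cl N -> Prop :=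
  linspan (fun x => exists v g, [/\ W' v, deg0_alg g & x = inU' v * g]).

Lemma deg0_alg_lin_closed : lin_closed deg0_alg.
Proof. exact: gen_alg_lin_closed. Qed.

Lemma deg0_alg_inU_inU' u v : W u -> W' v -> deg0_alg (inU u * inU' v).
Proof. by move=> Wu W'v; apply: ga_gen; exists u, v. Qed.

Lemma pos_part_lin_closed n : lin_closed (pos_part n).
Proof. by case: n => [|n]; [exact: deg0_alg_lin_closed | exact: linspan_lin_closed]. Qed.

Lemma neg_part_lin_closed n : lin_closed (neg_part n).
Proof. by case: n => [|n]; [exact: deg0_alg_lin_closed | exact: linspan_lin_closed]. Qed.

Lemma deg_part_lin_closed k : lin_closed (deg_part k).
Proof. by case: k => n; [exact: pos_part_lin_closed | exact: neg_part_lin_closed]. Qed.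

Lemma pos_part_inU_mul n u y : W u -> pos_part n y -> pos_part n.+1 (inU u * y).
Proof. by move=> Wu hy; apply: linspan_gen; exists u, y. Qed.

Lemma neg_part_mul_inU' n v y : W' v -> neg_part n y -> neg_part n.+1 (y * inU' v).
Proof. by move=> W'v hy; apply: linspan_gen; exists v, y. Qed.

Lemma pos_part1_mul_deg0 y g : pos_part 1 y -> deg0_alg g -> pos_part 1 (y * g).
Proof.
move=> hy hg; move: y hy; apply: linspan_rmul; first exact: linspan_lin_closed.
move=> _ [u [y [Wu hy ->]]]; rewrite -mulrA.
by apply: pos_part_inU_mul => //; apply: ga_mul.
Qed.

Lemma W'deg0_mul_deg0 y g : W'deg0 y -> deg0_alg g -> W'deg0 (y * g).
Proof.
move=> hy hg; move: y hy; apply: linspan_rmul; first exact: linspan_lin_closed.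
move=> _ [v [y [W'v hy ->]]]; rewrite -mulrA.
by apply: linspan_gen; exists v, (y * g); split=> //; apply: ga_mul.
Qed.

Lemma deg0_mul_inU g : deg0_alg g -> forall u, W u -> pos_part 1 (g * inU u).
Proof.
elim=> {g} [_ [u1 [v1 [Wu1 W'v1 ->]]]| |x y _ hx _ hy|c x _ hx|x y _ hx _ hy] u Wu.
- have -> : inU u1 * inU' v1 * inU u =
            pairing u v1 *: (inU u1 * 1) + inU u * (inU u1 * inU' v1).
    by rewrite -mulrA inU'_inU mulrBr -scaleClAr mulrA inU_anticomm mulNr mulrA.
  have [_ PD PZ] := pos_part_lin_closed 1.
  apply: PD; first by apply/PZ/pos_part_inU_mul => //; exact: ga_one.
  by apply: pos_part_inU_mul => //; apply: deg0_alg_inU_inU'.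
- by rewrite mul1r -[inU u]mulr1; apply: pos_part_inU_mul => //; exact: ga_one.
- by rewrite mulrDl; apply: linspanD; [exact: hx | exact: hy].
- by rewrite -scaleClAl; apply: linspanZ; exact: hx.
- rewrite -mulrA; move: (hy u Wu); apply: linspan_lmul; first exact: linspan_lin_closed.
  move=> _ [u' [y' [Wu' hy' ->]]]; rewrite mulrA.
  by apply: pos_part1_mul_deg0 => //; exact: hx.
Qed.

Lemma deg0_mul_inU' g : deg0_alg g -> forall v, W' v -> W'deg0 (g * inU' v).
Proof.
elim=> {g} [_ [u1 [v1 [Wu1 W'v1 ->]]]| |x y _ hx _ hy|c x _ hx|x y _ hx _ hy] v W'v.
- have -> : inU u1 * inU' v1 * inU' v =
            inU' v * (inU u1 * inU' v1) + (- pairing u1 v) *: (inU' v1 * 1).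
    rewrite -mulrA inU'_anticomm mulrN mulrA inU'_inU mulrBl -scaleClAl.
    by rewrite mul1r mulr1 mulrA scaleNr addrAC subrr add0r.
  apply: linspanD; first by apply: linspan_gen; exists v, (inU u1 * inU' v1); split=> //; apply: deg0_alg_inU_inU'.
  by apply/linspanZ/linspan_gen; exists v1, 1; split=> //; exact: ga_one.
- by rewrite mul1r -[inU' v]mulr1; apply: linspan_gen; exists v, 1; split=> //; exact: ga_one.
- by rewrite mulrDl; apply: linspanD; [exact: hx | exact: hy].
- by rewrite -scaleClAl; apply: linspanZ; exact: hx.
- rewrite -mulrA; move: (hy v W'v); apply: linspan_lmul; first exact: linspan_lin_closed.
  move=> _ [v' [y' [W'v' hy' ->]]]; rewrite mulrA.
  by apply: W'deg0_mul_deg0 => //; exact: hx.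
Qed.


Lemma pos_part_mul_inU n y u : pos_part n y -> W u -> pos_part n.+1 (y * inU u).
Proof.
elim: n y => [|n IH] y hy Wu; first exact: deg0_mul_inU.
move: y hy; apply: linspan_rmul; first exact: linspan_lin_closed.
move=> _ [u' [y [Wu' hy ->]]]; rewrite -mulrA.
by apply: pos_part_inU_mul => //; apply: IH.
Qed.

Lemma pos_part_mul_inU' n y v : pos_part n.+1 y -> W' v -> pos_part n (y * inU' v).
Proof.
elim: n y => [|n IH] y hy W'v; move: y hy.
  apply: linspan_rmul; first exact: deg0_alg_lin_closed.
  move=> _ [u [g [Wu hg ->]]]; rewrite -mulrA.
  move: (deg0_mul_inU' hg W'v); apply: linspan_lmul; first exact: deg0_alg_lin_closed.
  move=> _ [v' [g' [W'v' hg' ->]]]; rewrite mulrA.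
  by apply: ga_mul => //; apply: deg0_alg_inU_inU'.
apply: linspan_rmul; first exact: linspan_lin_closed.
move=> _ [u [y [Wu hy ->]]]; rewrite -mulrA.
by apply: pos_part_inU_mul => //; apply: IH.
Qed.

Lemma neg_part_mul_inU n y u : neg_part n.+1 y -> W u -> neg_part n (y * inU u).
Proof.
have step m y' v : W' v -> neg_part m y' -> neg_part m (y' * inU u * inU' v) ->
    neg_part m (y' * inU' v * inU u).
  move=> W'v hy' hy'uv; have [_ PD PZ] := neg_part_lin_closed m.
  rewrite -mulrA inU'_inU mulrBr -scaleClAr mulr1 mulrA -scaleN1r.
  by apply: PD; apply: PZ.
elim: n y => [|n IH] y hy Wu; move: y hy;
  apply: linspan_rmul => [|_ [v [y [W'v hy ->]]]]; try exact: neg_part_lin_closed.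
  by apply: step => //; apply: (pos_part_mul_inU' (n := 0)) => //; exact: deg0_mul_inU.
by apply: step => //; apply: neg_part_mul_inU' => //; exact: IH.
Qed.

Lemma deg_part_mul_inU k y u : deg_part k y -> W u -> deg_part (k + 1) (y * inU u).
Proof.
case: k => [n|[|n]] hy Wu.
- have -> : Posz n + 1 = Posz n.+1 by lia.
  exact: pos_part_mul_inU.
- exact: (neg_part_mul_inU (n := 0)).
- have -> : Negz n.+1 + 1 = Negz n by rewrite !NegzE; lia.
  exact: neg_part_mul_inU.
Qed.

Lemma deg_part_mul_inU' k y v : deg_part k y -> W' v -> deg_part (k - 1) (y * inU' v).
Proof.
case: k => [[|n]|n] hy W'v.
- exact: (neg_part_mul_inU' (n := 0)).
- have -> : Posz n.+1 - 1 = Posz n by lia.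
  exact: pos_part_mul_inU'.
- have -> : Negz n - 1 = Negz n.+1 by rewrite !NegzE; lia.
  exact: neg_part_mul_inU'.
Qed.

Lemma deg_part_mul_deg0 g : deg0_alg g -> forall k y, deg_part k y -> deg_part k (y * g).
Proof.
elim=> {g} [_ [u [v [Wu W'v ->]]]| |a b _ ha _ hb|c a _ ha|a b _ ha _ hb] k y hy.
- rewrite mulrA -[k](addrK 1).
  by apply: deg_part_mul_inU' => //; apply: deg_part_mul_inU.
- by rewrite mulr1.
- by have [_ PD _] := deg_part_lin_closed k; rewrite mulrDr; apply: PD; [apply: ha | apply: hb].
- by have [_ _ PZ] := deg_part_lin_closed k; rewrite -scaleClAr; apply: PZ; apply: ha.
- by rewrite mulrA; apply: hb; apply: ha.
Qed.

Lemma deg_part_mul_pos n : forall k x y, deg_part k x -> pos_part n y ->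
  deg_part (k + n) (x * y).
Proof.
elim: n => [|n IH] k x y hx hy; first by rewrite addr0; exact: deg_part_mul_deg0 hy k x hx.
move: y hy; apply: linspan_lmul; first exact: deg_part_lin_closed.
move=> _ [u [y [Wu hy ->]]]; rewrite mulrA.
have -> : k + n.+1 = (k + 1) + n by lia.
by apply: IH => //; apply: deg_part_mul_inU.
Qed.

Lemma deg_part_mul_neg n : forall k x y, deg_part k x -> neg_part n y ->
  deg_part (k - n%:Z) (x * y).
Proof.
elim: n => [|n IH] k x y hx hy; first by rewrite subr0; exact: deg_part_mul_deg0 hy k x hx.
move: y hy; apply: linspan_lmul; first exact: deg_part_lin_closed.
move=> _ [v [y [W'v hy ->]]]; rewrite mulrA.
have -> : k - n.+1%:Z = (k - n%:Z) - 1 by lia.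
by apply: deg_part_mul_inU' => //; apply: IH.
Qed.

Lemma deg_part_mul k m x y : deg_part k x -> deg_part m y -> deg_part (k + m) (x * y).
Proof.
case: m => n hx hy; first exact: deg_part_mul_pos.
have -> : k + Negz n = k - n.+1%:Z by rewrite NegzE.
exact: deg_part_mul_neg.
Qed.

Definition ClW_of : Cl N -> Prop :=
  gen_alg (fun x => (exists2 u, W u & x = inU u) \/ (exists2 v, W' v & x = inU' v)).

Lemma dproj_ClW_of x : ClW_of x -> forall k, deg_part k (dproj k x).
Proof.
have P0 k : deg_part k 0 by case: (deg_part_lin_closed k).
elim=> {x} [_ [[u Wu ->]|[v W'v ->]]| |x y _ hx _ hy|c x _ hx|x y _ hx _ hy] k.
- rewrite (dproj_homog _ (homog_inU u)); case: eqP => [<-|_]; last exact: P0.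
  by rewrite -[inU u]mulr1; apply: pos_part_inU_mul => //; exact: ga_one.
- rewrite (dproj_homog _ (homog_inU' v)); case: eqP => [<-|_]; last exact: P0.
  by rewrite -[inU' v]mul1r; apply: neg_part_mul_inU' => //; exact: ga_one.
- rewrite (dproj_homog _ (@homog1 N)); case: eqP => [<-|_]; last exact: P0.
  exact: ga_one.
- by rewrite dprojD; case: (deg_part_lin_closed k) => _ PD _; apply: PD.
- by rewrite dprojZ; case: (deg_part_lin_closed k) => _ _ PZ; apply: PZ.
- rewrite dprojM; apply: lin_closed_sum => [|m _]; first exact: deg_part_lin_closed.
  by move: (deg_part_mul (hx (m%:Z - N%:Z)) (hy (k - (m%:Z - N%:Z)))); rewrite addrC subrK.
Qed.

Lemma ClW_of_homog0 x : ClW_of x /\ homog 0 x <-> deg0_alg x.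
Proof.
split=> [[hx x0]|]; first by have := dproj_ClW_of hx 0; rewrite (dproj_homog _ x0) eqxx.
elim=> {x} [_ [u [v [Wu W'v ->]]]| |x y _ [hx x0] _ [hy y0]|c x _ [hx x0]|x y _ [hx x0] _ [hy y0]].
- split; first by apply: ga_mul; apply: ga_gen; [left; exists u | right; exists v].
  by rewrite -(addrN 1); apply: homogM; [exact: homog_inU | exact: homog_inU'].
- by split; [exact: ga_one | exact: homog1].
- by split; [exact: ga_add | exact: homogD].
- by split; [exact: ga_scale | exact: homogZ].
- by split; [exact: ga_mul | rewrite -(addr0 0); exact: homogM].
Qed.

End DegreeParts.

(** * The gl relations *)

Lemma inU_inU'_commutator N (u v u' v' : 'I_N -> C) :
  inU u * inU' v * (inU u' * inU' v') - inU u' * inU' v' * (inU u * inU' v) =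
  pairing u' v *: (inU u * inU' v') - pairing u v' *: (inU u' * inU' v).
Proof.
have reorder (a b a' b' : 'I_N -> C) :
    inU a * inU' b * (inU a' * inU' b') =
    pairing a' b *: (inU a * inU' b') - inU a * inU a' * (inU' b * inU' b').
  rewrite mulrA -(mulrA (inU a)) inU'_inU mulrBr mulrBl -scaleClAr mulr1.
  by rewrite -scaleClAl !mulrA.
rewrite !reorder (inU_anticomm u) (inU'_anticomm v) mulNr mulrN opprK.
by rewrite opprB addrA subrK.
Qed.

Lemma gl_relations_dual N d (w w' : 'I_d -> 'I_N -> C) :
  (forall i j, pairing (w i) (w' j) = (i == j)%:R) ->
  gl_relations (fun i j => inU (w i) * inU' (w' j)).
Proof.
move=> dual i j k l; rewrite inU_inU'_commutator !dual (eq_sym k j) (eq_sym i l).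
by congr (_ - _); case: eqP; rewrite ?scale1r ?scale0r.
Qed.

Lemma sum_scale_lincomb N d (g : 'I_N -> Cl N) (u : 'I_N -> C) (c : 'I_d -> C) f :
  (forall k, u k = \sum_i c i * f i k) ->
  \sum_k u k *: g k = \sum_i c i *: \sum_k f i k *: g k.
Proof.
move=> uE; under eq_bigr => k _ do rewrite uE scaler_suml.
rewrite exchange_big; apply: eq_bigr => i _ /=.
by rewrite scaler_sumr; apply: eq_bigr => k _; rewrite scalerA.
Qed.

Lemma deg0_alg_spanned N d (W W' : ('I_N -> C) -> Prop) (w w' : 'I_d -> 'I_N -> C) :
  (forall u, W u -> exists c : 'I_d -> C, forall k, u k = \sum_i c i * w i k) ->
  (forall v, W' v -> exists c : 'I_d -> C, forall k, v k = \sum_i c i * w' i k) ->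
  forall x, deg0_alg W W' x -> gen_alg (fun y => exists i j, y = inU (w i) * inU' (w' j)) x.
Proof.
move=> w_span w'_span; apply: gen_alg_min => _ [u [v [Wu W'v ->]]].
have [c uE] := w_span u Wu; have [c' vE] := w'_span v W'v.
rewrite /inU /inU' (sum_scale_lincomb _ uE) (sum_scale_lincomb _ vE) mulr_suml.
apply: lin_closed_sum => [|i _]; first exact: gen_alg_lin_closed.
rewrite mulr_sumr; apply: lin_closed_sum => [|j _]; first exact: gen_alg_lin_closed.
by rewrite -scaleClAl -scaleClAr scalerA; apply/ga_scale/ga_gen; exists i, j.
Qed.

Unset Implicit Arguments.
Theorem mainTheorem3 (N : nat) (z n : 'I_N -> C) :
  (0 < N)%N ->
  (forall i, z i != 0) ->
  (\prod_i z i) ^+ 2 - (\prod_i z i) ^- 2 != 0 ->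
  (* the commutant of Phi(G) in Cl_W is the Euler-degree-0 part of Cl_W *)
  (forall x : Cl N, (ClW z x /\ x * phiG n = phiG n * x) <->
                    (ClW z x /\ euler_deg0 x)) /\
  (* which is the subalgebra generated by the products w w' *)
  (forall x : Cl N, (ClW z x /\ euler_deg0 x) <-> gen_alg (prodWW' z) x) /\
  (* for dual bases of W and W', E_ij |-> w_i w'_j extends to an algebra
     homomorphism U(gl(W)) -> Cl_W whose image is this subalgebra *)
  (forall (d : nat) (w w' : 'I_d -> 'I_N -> C),
     is_basis (inW z) w -> is_basis (inW' z) w' ->
     (forall i j, pairing (w i) (w' j) = (i == j)%:R) ->
     gl_relations (fun i j => inU (w i) * inU' (w' j)) /\
     (forall i j, ClW z (inU (w i) * inU' (w' j))) /\
     (forall x : Cl N,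
        gen_alg (fun y => exists i j, y = inU (w i) * inU' (w' j)) x <->
        (ClW z x /\ x * phiG n = phiG n * x))).
Proof.
move=> _ _ _.
have commutant x : (ClW z x /\ x * phiG n = phiG n * x) <-> (ClW z x /\ euler_deg0 x).
  by rewrite phiG_commute_homog0 euler_deg0_homog.
have deg0 x : (ClW z x /\ euler_deg0 x) <-> gen_alg (prodWW' z) x.
  by rewrite euler_deg0_homog; exact: ClW_of_homog0.
split=> //; split=> // d w w' [Ww _ w_span] [W'w' _ w'_span] dual.
split; first exact: gl_relations_dual.
split=> [i j|x].
  by apply: ga_mul; apply: ga_gen; [left; exists (w i) | right; exists (w' j)].
rewrite commutant deg0; split; last exact: deg0_alg_spanned.
by apply: gen_alg_min => _ [i [j ->]]; apply: ga_gen; exists (w i), (w' j).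
Qed.
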